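(* Let $\Bbbk$ be a field of characteristic $0$, $B=\bigoplus_{s=1}^N\Bbbk e_s$ ($N\ge2$), and let $(A,\{\!\{-,-\}\!\},\Phi)$ be a quasi-Hamiltonian algebra over $B$ with $\Phi=\sum_s\Phi_s$, $\Phi_s\in e_sAe_s$. Let $A^f$ be the fusion algebra obtained by fusing $e_2$ onto $e_1$ with double bracket $\{\!\{-,-\}\!\}^f=\{\!\{-,-\}\!\}_{ind}+\{\!\{-,-\}\!\}_{fus}$, and set $\operatorname{Tr}(\Phi_s)=\epsilon\Phi_s\epsilon$ for $s\ne2$, $\operatorname{Tr}(\Phi_2)=e_{12}\Phi_2e_{21}$. Then for every $s\ne1,2$ and every $a\in A^f$, $$\{\!\{\operatorname{Tr}(\Phi_s),a\}\!\}^f=\tfrac12\big(ae_s\otimes\operatorname{Tr}(\Phi_s)+a\operatorname{Tr}(\Phi_s)\otimes e_s-e_s\otimes\operatorname{Tr}(\Phi_s)a-\operatorname{Tr}(\Phi_s)\otimes e_sa\big),$$ and, setting $\Phi^f_1=\operatorname{Tr}(\Phi_1)\operatorname{Tr}(\Phi_2)$, for every $a\in A^f$, $$\{\!\{\Phi^f_1,a\}\!\}^f=\tfrac12\big(ae_1\otimes\Phi^f_1+a\Phi^f_1\otimes e_1-e_1\otimes\Phi^f_1a-\Phi^f_1\otimes e_1a\big).$$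
   Context: Conventions: $\otimes=\otimes_\Bbbk$; Sweedler notation $d=d'\otimes d''$; outer bimodule structure $b(a_1\otimes a_2)c=ba_1\otimes a_2c$. A $B$-linear double bracket is a $\Bbbk$-bilinear map $A\times A\to A\otimes A$ vanishing when an argument lies in $B$, with $\{\!\{a,b\}\!\}=-\{\!\{b,a\}\!\}''\otimes\{\!\{b,a\}\!\}'$ and $\{\!\{a,bc\}\!\}=\{\!\{a,b\}\!\}c+b\{\!\{a,c\}\!\}$. With $\tau(a_1\otimes a_2\otimes a_3)=a_3\otimes a_1\otimes a_2$, its triple bracket is $\{\!\{a,b,c\}\!\}=\{\!\{a,\{\!\{b,c\}\!\}'\}\!\}\otimes\{\!\{b,c\}\!\}''+\tau\{\!\{b,\{\!\{c,a\}\!\}'\}\!\}\otimes\{\!\{c,a\}\!\}''+\tau^2\{\!\{c,\{\!\{a,b\}\!\}'\}\!\}\otimes\{\!\{a,b\}\!\}''$; it is quasi-Poisson if $\{\!\{a,b,c\}\!\}=\frac14\sum_s(ce_sa\otimes e_sb\otimes e_s-ce_sa\otimes e_s\otimes be_s-ce_s\otimes ae_sb\otimes e_s+ce_s\otimes ae_s\otimes be_s-e_sa\otimes e_sb\otimes e_sc+e_sa\otimes e_s\otimes be_sc+e_s\otimes ae_sb\otimes e_sc-e_s\otimes ae_s\otimes be_sc)$. Quasi-Hamiltonian: quasi-Poisson with invertible $\Phi=\sum_s\Phi_s$, $\Phi_s\in e_sAe_s$, and $\{\!\{\Phi_s,a\}\!\}=\frac12(ae_s\otimes\Phi_s-e_s\otimes\Phi_sa+a\Phi_s\otimes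 e_s-\Phi_s\otimes e_sa)$ for all $a,s$. Fusion: $\mu=1-e_1-e_2$; $\mathrm{Mat}_2(\Bbbk)$ with matrix units $e_{11}=e_1,e_{12},e_{21},e_{22}=e_2$; $\bar A=A*_{\Bbbk e_1\oplus\Bbbk e_2\oplus\Bbbk\mu}(\mathrm{Mat}_2(\Bbbk)\oplus\Bbbk\mu)$; $\epsilon=1-e_2$; $A^f=\epsilon\bar A\epsilon$. Generators of $A^f$: $t\in\epsilon A\epsilon$, $e_{12}u$ ($u\in e_2A\epsilon$), $ve_{21}$ ($v\in\epsilon Ae_2$), $e_{12}we_{21}$ ($w\in e_2Ae_2$), written $e_+\alpha e_-$. $\{\!\{e_+\alpha e_-,f_+\beta f_-\}\!\}_{ind}=f_+\{\!\{\alpha,\beta\}\!\}'e_-\otimes e_+\{\!\{\alpha,\beta\}\!\}''f_-$. $\operatorname{Tr}(E_1),\operatorname{Tr}(E_2)$ are the derivations $A^f\to A^f\otimes A^f$ with $\operatorname{Tr}(E_1)(t)=te_1\otimes e_1-e_1\otimes e_1t$, $\operatorname{Tr}(E_2)(t)=0$; $\operatorname{Tr}(E_1)(e_{12}u)=e_{12}ue_1\otimes e_1$, $\operatorname{Tr}(E_2)(e_{12}u)=-e_1\otimes e_{12}u$; $\operatorname{Tr}(E_1)(ve_{21})=-e_1\otimes e_1ve_{21}$, $\operatorname{Tr}(E_2)(ve_{21})=ve_{21}\otimes e_1$; $\operatorname{Tr}(E_1)(e_{12}we_{21})=0$, $\operatorname{Tr}(E_2)(e_{12}we_{21})=e_{12}we_{21}e_1\otimes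 e_1-e_1\otimes e_1e_{12}we_{21}$; and $\{\!\{a,b\}\!\}_{fus}=-\frac12\operatorname{Tr}(E_2)(b)'\operatorname{Tr}(E_1)(a)''\otimes\operatorname{Tr}(E_1)(a)'\operatorname{Tr}(E_2)(b)''+\frac12\operatorname{Tr}(E_1)(b)'\operatorname{Tr}(E_2)(a)''\otimes\operatorname{Tr}(E_2)(a)'\operatorname{Tr}(E_1)(b)''$. *)

From mathcomp Require Import all_boot all_algebra.
Set Implicit Arguments. Unset Strict Implicit. Unset Printing Implicit Defensive.
Import GRing.Theory.
Local Open Scope ring_scope.

(* Tensor powers V (x) V and V (x) V (x) V of a k-vector space V, encoded     *)
(* faithfully through their duals: an element of V(x)V is represented by the  *)
(* functional it induces on k-bilinear forms V x V -> k (pure tensor x (x) y  *)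
(* acts by  phi |-> phi x y).  Two tensors are equal iff they agree on all    *)
(* bilinear forms (tensor products of vector spaces embed in their double     *)
(* dual), see [teq].  Genuine elements of V(x)V are the finite sums of pure   *)
(* tensors, see [is_tensor2].                                                 *)

Section Tensors.
Variables (k : fieldType) (V : algType k).

Definition bilin (phi : V -> V -> k) : Prop :=
  (forall c x1 x2 y, phi (c *: x1 + x2) y = c * phi x1 y + phi x2 y) /\
  (forall c x y1 y2, phi x (c *: y1 + y2) = c * phi x y1 + phi x y2).

Definition trilin (psi : V -> V -> V -> k) : Prop :=
  (forall c x1 x2 y z, psi (c *: x1 + x2) y z = c * psi x1 y z + psi x2 y z) /\
  (forall c x y1 y2 z, psi x (c *: y1 + y2) z = c * psi x y1 z + psi x y2 z) /\
  (forall c x y z1 z2, psi x y (c *: z1 + z2) = c * psi x y z1 + psi x y z2).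

Definition tensor2 := (V -> V -> k) -> k.
Definition tensor3 := (V -> V -> V -> k) -> k.

Definition teq (d1 d2 : tensor2) : Prop :=
  forall phi, bilin phi -> d1 phi = d2 phi.
Definition teq3 (X1 X2 : tensor3) : Prop :=
  forall psi, trilin psi -> X1 psi = X2 psi.

Definition ev2 (x y : V) : tensor2 := fun phi => phi x y.
Definition ev3 (x y z : V) : tensor3 := fun psi => psi x y z.

Definition tzero : tensor2 := fun _ => 0.
Definition tadd (d1 d2 : tensor2) : tensor2 := fun phi => d1 phi + d2 phi.
Definition tscale (c : k) (d : tensor2) : tensor2 := fun phi => c * d phi.
Definition tadd3 (X1 X2 : tensor3) : tensor3 := fun psi => X1 psi + X2 psi.

Definition is_tensor2_in (P : V -> Prop) (d : tensor2) : Prop :=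
  exists s : seq (k * V * V),
    (forall t, t \in s -> P t.1.2 /\ P t.2) /\
    teq d (fun phi => \sum_(t <- s) t.1.1 * phi t.1.2 t.2).

(* d' (x) d''  |->  d'' (x) d' *)
Definition tswap (d : tensor2) : tensor2 := fun phi => d (fun x y => phi y x).

(* outer bimodule structure: b (d' (x) d'') c = b d' (x) d'' c *)
Definition lmul (b : V) (d : tensor2) : tensor2 :=
  fun phi => d (fun x y => phi (b * x) y).
Definition rmul (d : tensor2) (c : V) : tensor2 :=
  fun phi => d (fun x y => phi x (y * c)).

(* the product  (y, x) |-> y' x'' (x) x' y''  (Sweedler notation) *)
Definition tprod (y x : tensor2) : tensor2 :=
  fun phi => x (fun x1 x2 => y (fun y1 y2 => phi (y1 * x2) (x1 * y2))).

(* tau (a1 (x) a2 (x) a3) = a3 (x) a1 (x) a2 *)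
Definition tau (X : tensor3) : tensor3 :=
  fun psi => X (fun a1 a2 a3 => psi a3 a1 a2).

(* {{a, d'}} (x) d'' *)
Definition tens_br (br : V -> V -> tensor2) (a : V) (d : tensor2) : tensor3 :=
  fun psi => d (fun x y => br a x (fun u v => psi u v y)).

Definition triple_br (br : V -> V -> tensor2) (a b c : V) : tensor3 :=
  tadd3 (tens_br br a (br b c))
    (tadd3 (tau (tens_br br b (br c a))) (tau (tau (tens_br br c (br a b))))).

(* A double bracket on the subspace P of V (a subalgebra with unit), linear *)
(* over the subalgebra spanned by the idempotents in [Bs] (i.e. vanishing when  *)
(* an argument lies in it).                                                   *)
Definition double_bracket_on (P : V -> Prop) (n : nat) (Bs : 'I_n -> V)
    (br : V -> V -> tensor2) : Prop :=
  (forall a b, P a -> P b -> is_tensor2_in P (br a b)) /\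
  (forall c a1 a2 b, P a1 -> P a2 -> P b ->
     teq (br (c *: a1 + a2) b) (tadd (tscale c (br a1 b)) (br a2 b))) /\
  (forall c a b1 b2, P a -> P b1 -> P b2 ->
     teq (br a (c *: b1 + b2)) (tadd (tscale c (br a b1)) (br a b2))) /\
  (forall (c : 'I_n -> k) a, P a ->
     teq (br (\sum_i c i *: Bs i) a) tzero /\ teq (br a (\sum_i c i *: Bs i)) tzero) /\
  (forall a b, P a -> P b -> teq (br a b) (tscale (-1) (tswap (br b a)))) /\
  (forall a b c, P a -> P b -> P c ->
     teq (br a (b * c)) (tadd (rmul (br a b) c) (lmul b (br a c)))).

End Tensors.

Section QuasiHam.
Variables (k : fieldType) (A : algType k) (N : nat) (e : 'I_N -> A).

Definition idempotent_family : Prop :=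
  (forall s t, e s * e t = if s == t then e s else 0) /\ \sum_s e s = 1.

Definition qP_rhs (a b c : A) : tensor3 A :=
  fun psi => 4%:R^-1 * \sum_s
   (  psi (c * e s * a) (e s * b) (e s)
    - psi (c * e s * a) (e s) (b * e s)
    - psi (c * e s) (a * e s * b) (e s)
    + psi (c * e s) (a * e s) (b * e s)
    - psi (e s * a) (e s * b) (e s * c)
    + psi (e s * a) (e s) (b * e s * c)
    + psi (e s) (a * e s * b) (e s * c)
    - psi (e s) (a * e s) (b * e s * c)).

Definition quasi_Poisson (br : A -> A -> tensor2 A) : Prop :=
  double_bracket_on (fun _ => True) e br /\
  forall a b c, teq3 (triple_br br a b c) (qP_rhs a b c).

Definition moment_rhs (V : algType k) (es F a : V) : tensor2 V :=
  fun phi => 2%:R^-1 *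
    (phi (a * es) F - phi es (F * a) + phi (a * F) es - phi F (es * a)).

Definition quasi_Hamiltonian (br : A -> A -> tensor2 A) (Phi : 'I_N -> A) : Prop :=
  quasi_Poisson br /\
  (forall s, e s * Phi s * e s = Phi s) /\
  (exists Psi : A, (\sum_s Phi s) * Psi = 1 /\ Psi * (\sum_s Phi s) = 1) /\
  (forall s a, teq (br (Phi s) a) (moment_rhs (e s) (Phi s) a)).

End QuasiHam.

(* Mat_2(k) (+) k mu *)
Definition MatMu (k : fieldType) : algType k := ('M[k]_2 * k^o)%type.
Definition Mat_e11 (k : fieldType) : MatMu k := (delta_mx 0 0, 0).
Definition Mat_e12 (k : fieldType) : MatMu k := (delta_mx 0 1, 0).
Definition Mat_e21 (k : fieldType) : MatMu k := (delta_mx 1 0, 0).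
Definition Mat_e22 (k : fieldType) : MatMu k := (delta_mx 1 1, 0).

Definition alg_hom (k : fieldType) (U W : algType k) (f : U -> W) : Prop :=
  (forall x y, f (x + y) = f x + f y) /\ (forall (c : k) x, f (c *: x) = c *: f x) /\
  (forall x y, f (x * y) = f x * f y) /\ f 1 = 1.

(* (Abar, iA, jM) is the free product  A *_{k e1 + k e2 + k mu} (Mat_2(k) + k mu)  *)
(* (pushout of unital k-algebras), where e1, e2 are the given elements of A   *)
(* and mu = 1 - e1 - e2 (which is then automatically matched as well).        *)
Definition is_free_product (k : fieldType) (A Abar : algType k) (e1 e2 : A)
    (iA : A -> Abar) (jM : MatMu k -> Abar) : Prop :=
  alg_hom iA /\ alg_hom jM /\ iA e1 = jM (Mat_e11 k) /\ iA e2 = jM (Mat_e22 k) /\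
  forall (C : algType k) (f : A -> C) (g : MatMu k -> C),
    alg_hom f -> alg_hom g -> f e1 = g (Mat_e11 k) -> f e2 = g (Mat_e22 k) ->
    exists h : Abar -> C,
      (alg_hom h /\ (forall x, h (iA x) = f x) /\ (forall y, h (jM y) = g y)) /\
      forall h' : Abar -> C,
        alg_hom h' -> (forall x, h' (iA x) = f x) -> (forall y, h' (jM y) = g y) ->
        forall z, h' z = h z.

Section Fusion.
Variables (k : fieldType) (A Abar : algType k) (n : nat) (e : 'I_n.+2 -> A)
  (iA : A -> Abar) (jM : MatMu k -> Abar).

(* e_1 = e ord0, e_2 = e 1 *)
Definition e1A : A := e ord0.
Definition e2A : A := e 1.
Definition epsA : A := 1 - e2A.
Definition E12 : Abar := jM (Mat_e12 k).
Definition E21 : Abar := jM (Mat_e21 k).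
Definition e1b : Abar := iA e1A.
Definition eps : Abar := 1 - iA e2A.

(* A^f = eps Abar eps *)
Definition inAf (x : Abar) : Prop := eps * x * eps = x.

(* generators e_+ alpha e_- : p = true means e_+ = e12 (else eps), q = true   *)
(* means e_- = e21 (else eps); alpha lies in the corresponding corner of A.   *)
Definition gen_ok (p q : bool) (alpha : A) : Prop :=
  (if p then e2A else epsA) * alpha * (if q then e2A else epsA) = alpha.
Definition eplus (p : bool) : Abar := if p then E12 else eps.
Definition eminus (q : bool) : Abar := if q then E21 else eps.
Definition gen (p q : bool) (alpha : A) : Abar := eplus p * iA alpha * eminus q.

Definition br_ind (brA : A -> A -> tensor2 A) (p q : bool) (alpha : A)
    (p' q' : bool) (beta : A) : tensor2 Abar :=
  fun phi => brA alpha beta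
    (fun y1 y2 => phi (eplus p' * iA y1 * eminus q) (eplus p * iA y2 * eminus q')).

Definition TrE1 (p q : bool) (alpha : A) : tensor2 Abar :=
  let x := gen p q alpha in
  match p, q with
  | false, false => tadd (ev2 (x * e1b) e1b) (tscale (-1) (ev2 e1b (e1b * x)))
  | true, false => ev2 (x * e1b) e1b
  | false, true => tscale (-1) (ev2 e1b (e1b * x))
  | true, true => @tzero _ Abar
  end.
Definition TrE2 (p q : bool) (alpha : A) : tensor2 Abar :=
  let x := gen p q alpha in
  match p, q with
  | false, false => @tzero _ Abar
  | true, false => tscale (-1) (ev2 e1b x)
  | false, true => ev2 x e1b
  | true, true => tadd (ev2 (x * e1b) e1b) (tscale (-1) (ev2 e1b (e1b * x)))
  end.

Definition br_fus (p q : bool) (alpha : A) (p' q' : bool) (beta : A) : tensor2 Abar :=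
  tadd (tscale (- 2%:R^-1) (tprod (TrE2 p' q' beta) (TrE1 p q alpha)))
       (tscale (2%:R^-1) (tprod (TrE1 p' q' beta) (TrE2 p q alpha))).

(* B^f = k e1 + sum_{s >= 3} k e_s, the idempotents of A^f *)
Definition Bf (s : 'I_n.+2) : Abar := if s == 1 then 0 else iA (e s).

Definition is_fusion_bracket (brA : A -> A -> tensor2 A) (brf : Abar -> Abar -> tensor2 Abar)
  : Prop :=
  double_bracket_on inAf Bf brf /\
  forall p q alpha p' q' beta, gen_ok p q alpha -> gen_ok p' q' beta ->
    teq (brf (gen p q alpha) (gen p' q' beta))
        (tadd (br_ind brA p q alpha p' q' beta) (br_fus p q alpha p' q' beta)).

Definition TrPhi (Phi : 'I_n.+2 -> A) (s : 'I_n.+2) : Abar :=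
  if s == 1 then E12 * iA (Phi s) * E21 else eps * iA (Phi s) * eps.

End Fusion.

(** Both sides of the moment map identity, for fixed first argument X in A^f,
    satisfy the Leibniz rule in the second argument: the bracket by axiom, the
    right-hand side [moment_rhs es X] by a direct computation.  They are also
    linear, so it suffices to check the identity on a set generating A^f as an
    algebra.  Since Abar is generated by A, E12 and E21, and
    1 = eps eps + E21 E12, the algebra A^f = eps Abar eps is generated by the
    corners e_+ z e_- of such generators, i.e. by the generators e_+ alpha e_-.
    On those the fusion bracket is the explicit sum of the induced and the
    fusion parts: for s <> 1, 2 the fusion part of {{Tr Phi_s, -}} vanishes and
    the induced part is the pushed-forward moment map of Phi_s; for
    Phi^f_1 = Tr Phi_1 Tr Phi_2 the Leibniz rule in the first argument splits
    the bracket into the two induced brackets, and the fusion part supplies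
    exactly the missing cross terms. *)

From HB Require Import structures.
From Pilot Require Import Defs.
From mathcomp Require Import all_boot all_algebra.
From mathcomp Require Import ring.
From Stdlib Require Import ClassicalEpsilon.
Set Implicit Arguments. Unset Strict Implicit. Unset Printing Implicit Defensive.
Import GRing.Theory.
Local Open Scope ring_scope.

Section Bilinear.
Variables (k : fieldType) (V : algType k) (phi : V -> V -> k).
Hypothesis phi_bilin : bilin phi.

Lemma bilinDl x y z : phi (x + y) z = phi x z + phi y z.
Proof. by have := phi_bilin.1 1 x y z; rewrite scale1r mul1r. Qed.

Lemma bilinDr x y z : phi z (x + y) = phi z x + phi z y.
Proof. by have := phi_bilin.2 1 z x y; rewrite scale1r mul1r. Qed.

Lemma bilin0l x : phi 0 x = 0.
Proof. by apply: (@addrI _ (phi 0 x)); rewrite -bilinDl !addr0. Qed.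

Lemma bilin0r x : phi x 0 = 0.
Proof. by apply: (@addrI _ (phi x 0)); rewrite -bilinDr !addr0. Qed.

Lemma bilinZl c x z : phi (c *: x) z = c * phi x z.
Proof. by have := phi_bilin.1 c x 0 z; rewrite !addr0 bilin0l addr0. Qed.

Lemma bilinZr c x z : phi z (c *: x) = c * phi z x.
Proof. by have := phi_bilin.2 c z x 0; rewrite !addr0 bilin0r addr0. Qed.

Lemma bilin_swap : bilin (fun x y => phi y x).
Proof. by case: phi_bilin => Hl Hr; split=> *; rewrite ?Hl ?Hr. Qed.

Lemma bilin_comp (U : algType k) (f g : U -> V) :
  linear f -> linear g -> bilin (fun x y => phi (f x) (g y)).
Proof. by case: phi_bilin => Hl Hr lf lg; split=> *; rewrite ?lf ?lg ?Hl ?Hr. Qed.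

Lemma bilin_mull_fst c : bilin (fun x y => phi (c * x) y).
Proof. by case: phi_bilin => Hl Hr; split=> *; rewrite ?mulrDr -?scalerAr ?Hl ?Hr. Qed.

Lemma bilin_mulr_fst c : bilin (fun x y => phi (x * c) y).
Proof. by case: phi_bilin => Hl Hr; split=> *; rewrite ?mulrDl -?scalerAl ?Hl ?Hr. Qed.

Lemma bilin_mull_snd c : bilin (fun x y => phi x (c * y)).
Proof. by case: phi_bilin => Hl Hr; split=> *; rewrite ?mulrDr -?scalerAr ?Hl ?Hr. Qed.

Lemma bilin_mulr_snd c : bilin (fun x y => phi x (y * c)).
Proof. by case: phi_bilin => Hl Hr; split=> *; rewrite ?mulrDl -?scalerAl ?Hl ?Hr. Qed.

End Bilinear.

Lemma mulr_split_unit (R : pzRingType) (a z w b u1 v1 u2 v2 : R) :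
  u1 * v1 + u2 * v2 = 1 ->
  a * (z * w) * b = a * z * u1 * (v1 * w * b) + a * z * u2 * (v2 * w * b).
Proof. by move=> split1; rewrite -{1}[z]mulr1 -split1 !(mulrDr, mulrDl) !mulrA. Qed.

Lemma mulrA_eq (R : pzSemiRingType) (x y r : R) : x * y = r -> forall w, w * x * y = w * r.
Proof. by move=> xy w; rewrite -mulrA xy. Qed.

Section AlgHom.
Variables (k : fieldType) (U W : algType k) (f : U -> W).
Hypothesis f_hom : alg_hom f.

Lemma alg_homD x y : f (x + y) = f x + f y. Proof. by case: f_hom. Qed.
Lemma alg_homZ c x : f (c *: x) = c *: f x. Proof. by case: f_hom => _ []. Qed.
Lemma alg_homM x y : f (x * y) = f x * f y. Proof. by case: f_hom => _ [_ []]. Qed.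
Lemma alg_hom1 : f 1 = 1. Proof. by case: f_hom => _ [_ []]. Qed.
Lemma alg_hom0 : f 0 = 0. Proof. by rewrite -(scale0r 0) alg_homZ scale0r. Qed.
Lemma alg_homN x : f (- x) = - f x. Proof. by rewrite -scaleN1r alg_homZ scaleN1r. Qed.
Lemma alg_homB x y : f (x - y) = f x - f y. Proof. by rewrite alg_homD alg_homN. Qed.

Lemma linear_sandwich (u v : W) : linear (fun x => u * f x * v).
Proof. by move=> a x y; rewrite alg_homD alg_homZ mulrDr mulrDl -scalerAr -scalerAl. Qed.

End AlgHom.

Section MatrixUnits.
Variable k : fieldType.

Lemma MatMu_unitM (i j l m : 'I_2) :
  ((delta_mx i j, 0) : MatMu k) * (delta_mx l m, 0) =
  if j == l then (delta_mx i m, 0) else 0.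
Proof.
rewrite (_ : _ * _ = (delta_mx i j *m delta_mx l m, 0 * 0)) // mul_delta_mx_cond mulr0.
by case: (j == l).
Qed.

Lemma MatMu_decomp (m : MatMu k) :
  m = m.1 0 0 *: Mat_e11 k + m.1 0 1 *: Mat_e12 k + m.1 1 0 *: Mat_e21 k
      + m.1 1 1 *: Mat_e22 k + m.2 *: (1 - Mat_e11 k - Mat_e22 k).
Proof.
case: m => M c; congr pair => /=; last by rewrite !scaler0 !add0r !subr0 /GRing.scale /= mulr1.
apply/matrixP => i j; rewrite !mxE.
have ord2 (l : 'I_2) : (l == 0) || (l == 1) by case: l => [[|[|]]].
by case/orP: (ord2 i) => /eqP->; case/orP: (ord2 j) => /eqP->;
  rewrite /= ?(mulr1, mulr0, oppr0, addr0, add0r, subr0, subrr).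
Qed.

End MatrixUnits.

Section FreeProductInduction.
Variables (k : fieldType) (A Abar : algType k) (e1 e2 : A).
Variables (iA : A -> Abar) (jM : MatMu k -> Abar).
Hypothesis free : is_free_product e1 e2 iA jM.
Variable P : Abar -> Prop.
Hypothesis P_iA : forall x, P (iA x).
Hypotheses (P_E12 : P (jM (Mat_e12 k))) (P_E21 : P (jM (Mat_e21 k))).
Hypothesis P_lin : forall c u v, P u -> P v -> P (c *: u + v).
Hypothesis P_mul : forall u v, P u -> P v -> P (u * v).

Let iA_hom : alg_hom iA. Proof. by case: free. Qed.
Let jM_hom : alg_hom jM. Proof. by case: free => _ []. Qed.

Let P0 : P 0. Proof. by rewrite -(alg_hom0 iA_hom). Qed.
Let P_add u v : P u -> P v -> P (u + v).
Proof. by move=> Pu Pv; have := P_lin 1 Pu Pv; rewrite scale1r. Qed.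
Let P_scale c u : P u -> P (c *: u).
Proof. by move=> Pu; have := P_lin c Pu P0; rewrite addr0. Qed.

Let P_jM m : P (jM m).
Proof.
case: free => _ [_ [iA_e1 [iA_e2 _]]].
rewrite (MatMu_decomp m) !(alg_homD jM_hom) !(alg_homZ jM_hom) !(alg_homB jM_hom).
rewrite (alg_hom1 jM_hom) -iA_e1 -iA_e2 -(alg_hom1 iA_hom) -!(alg_homB iA_hom).
by repeat apply: P_add; apply: P_scale.
Qed.

(* Classical choice turns [P] into a boolean predicate, so that it carves out a
   subalgebra [subalg] of Abar; the uniqueness clause of the universal property
   then forces the inclusion of [subalg] to be onto. *)
Let Pb z : bool := if excluded_middle_informative (P z) then true else false.

Let PbP z : Pb z <-> P z.
Proof. by rewrite /Pb; case: excluded_middle_informative. Qed.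

Let Pb_subalg_closed : GRing.subsemialg_closed Pb.
Proof.
split; [ | split | | ].
- by apply/PbP; rewrite -(alg_hom1 iA_hom).
- by apply/PbP; apply: P0.
- by move=> u v /PbP Pu /PbP Pv; apply/PbP/P_add.
- by move=> c u /PbP Pu; apply/PbP/P_scale.
- by move=> u v /PbP Pu /PbP Pv; apply/PbP/P_mul.
Qed.

Record subalg := SubAlg { subalg_val : Abar; _ : Pb subalg_val }.
HB.instance Definition _ := [isSub for subalg_val].
HB.instance Definition _ := [Choice of subalg by <:].
HB.instance Definition _ :=
  GRing.SubChoice_isSubAlgebra.Build k Abar Pb subalg Pb_subalg_closed.

Lemma free_product_ind z : P z.
Proof.
case: free => _ [_ [iA_e1 [iA_e2 univ]]].
pose iS x : subalg := SubAlg (iffRL (PbP _) (P_iA x)).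
pose jS m : subalg := SubAlg (iffRL (PbP _) (P_jM m)).
have iS_hom : alg_hom iS.
  split; [|split; [|split]] => *; apply: val_inj => /=;
    by rewrite ?(alg_homD iA_hom) ?(alg_homZ iA_hom) ?(alg_homM iA_hom) ?(alg_hom1 iA_hom).
have jS_hom : alg_hom jS.
  split; [|split; [|split]] => *; apply: val_inj => /=;
    by rewrite ?(alg_homD jM_hom) ?(alg_homZ jM_hom) ?(alg_homM jM_hom) ?(alg_hom1 jM_hom).
have iS_e1 : iS e1 = jS (Mat_e11 k) by apply: val_inj.
have iS_e2 : iS e2 = jS (Mat_e22 k) by apply: val_inj.
have [h [[h_hom [h_iA h_jM]] _]] := univ subalg iS jS iS_hom jS_hom iS_e1 iS_e2.
have [h0 [_ h0_uniq]] := univ Abar iA jM iA_hom jM_hom iA_e1 iA_e2.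
have val_h_hom : alg_hom (fun z => subalg_val (h z)).
  by case: h_hom => hD [hZ [hM h1]]; split; [|split; [|split]] => *; rewrite ?hD ?hZ ?hM ?h1.
have id_hom : alg_hom (fun z : Abar => z) by [].
have -> : z = h0 z := h0_uniq _ id_hom (fun _ => erefl) (fun _ => erefl) z.
rewrite -(h0_uniq _ val_h_hom (fun x => congr1 subalg_val (h_iA x))
                               (fun m => congr1 subalg_val (h_jM m))).
by apply/PbP; case: (h z).
Qed.

End FreeProductInduction.

Definition moment_at (k : fieldType) (V : algType k) (br : V -> V -> tensor2 V)
  (es F a : V) : Prop := teq (br F a) (moment_rhs es F a).

Section MomentRhs.
Variables (k : fieldType) (V : algType k) (es F : V).

Lemma moment_rhsM a b phi :
  moment_rhs es F (a * b) phi =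
  moment_rhs es F a (fun x y => phi x (y * b)) + moment_rhs es F b (fun x y => phi (a * x) y).
Proof. by rewrite /moment_rhs !mulrA; ring. Qed.

Lemma moment_rhs_lin c a b phi : bilin phi ->
  moment_rhs es F (c *: a + b) phi = c * moment_rhs es F a phi + moment_rhs es F b phi.
Proof.
move=> phi_bilin; rewrite /moment_rhs !mulrDl !mulrDr -!scalerAl -!scalerAr.
rewrite !(bilinDl phi_bilin, bilinDr phi_bilin, bilinZl phi_bilin, bilinZr phi_bilin).
ring.
Qed.

Lemma moment_rhs0 phi : bilin phi -> moment_rhs es F 0 phi = 0.
Proof.
move=> phi_bilin; rewrite /moment_rhs /= !(@mulr0 V) !(@mul0r V).
by rewrite !(bilin0l phi_bilin, bilin0r phi_bilin) !subr0 addr0 mulr0.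
Qed.

End MomentRhs.

Section DoubleBracket.
Variables (k : fieldType) (V : algType k) (P : V -> Prop) (n : nat) (Bs : 'I_n -> V).
Variable br : V -> V -> tensor2 V.
Hypothesis br_double : double_bracket_on P Bs br.

Lemma bracket_mull x y a phi : P x -> P y -> P (x * y) -> P a -> bilin phi ->
  br (x * y) a phi = br x a (fun u v => phi (u * y) v) + br y a (fun u v => phi u (x * v)).
Proof.
case: br_double => _ [_ [_ [_ [skew leibniz]]]] Px Py Pxy Pa phi_bilin.
rewrite skew // /tscale /tswap leibniz //; last exact: bilin_swap.
rewrite /tadd /rmul /lmul.
rewrite (skew a x) //; last exact (bilin_swap (bilin_mulr_fst phi_bilin y)).
rewrite (skew a y) //; last exact (bilin_swap (bilin_mull_snd phi_bilin x)).
by rewrite /tscale /tswap; ring.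
Qed.

Variables (es F : V).
Hypothesis PF : P F.

Lemma moment_at0 : moment_at br es F 0.
Proof.
move=> phi phi_bilin; case: br_double => _ [_ [_ [Blin _]]].
have [_ /(_ phi phi_bilin)] := Blin (fun _ => 0) F PF.
rewrite big1 => [-> | i _]; last by rewrite scale0r.
by rewrite moment_rhs0.
Qed.

Lemma moment_at_lin c a b : P a -> P b ->
  moment_at br es F a -> moment_at br es F b -> moment_at br es F (c *: a + b).
Proof.
case: br_double => _ [_ [linr _]] Pa Pb Ma Mb phi phi_bilin.
by rewrite linr // /tadd /tscale Ma // Mb // moment_rhs_lin.
Qed.

Lemma moment_atD a b : P a -> P b ->
  moment_at br es F a -> moment_at br es F b -> moment_at br es F (a + b).
Proof. by have := moment_at_lin 1 (a := a) (b := b); rewrite scale1r. Qed.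

Lemma moment_atM a b : P a -> P b ->
  moment_at br es F a -> moment_at br es F b -> moment_at br es F (a * b).
Proof.
case: br_double => _ [_ [_ [_ [_ leibniz]]]] Pa Pb Ma Mb phi phi_bilin.
rewrite leibniz // /tadd /rmul /lmul moment_rhsM.
by rewrite Ma ?Mb //; [exact: bilin_mull_fst | exact: bilin_mulr_snd].
Qed.

End DoubleBracket.

Section FusionRelations.
Variables (k : fieldType) (n : nat) (A : algType k) (e : 'I_n.+2 -> A).
Variables (Abar : algType k) (iA : A -> Abar) (jM : MatMu k -> Abar).
Hypotheses (e_idem : idempotent_family e) (free : is_free_product (e1A e) (e2A e) iA jM).

Local Notation e1 := (iA (e1A e)).
Local Notation e2 := (iA (e2A e)).
Local Notation eps := (eps e iA).
Local Notation E12 := (E12 jM).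
Local Notation E21 := (E21 jM).

Let iA_hom : alg_hom iA. Proof. by case: free. Qed.
Let jM_hom : alg_hom jM. Proof. by case: free => _ []. Qed.
Let iA_e1 : e1 = jM (Mat_e11 k). Proof. by case: free => _ [_ []]. Qed.
Let iA_e2 : e2 = jM (Mat_e22 k). Proof. by case: free => _ [_ [_ []]]. Qed.

Lemma jM_unitM (i j l m : 'I_2) :
  jM (delta_mx i j, 0) * jM (delta_mx l m, 0) =
  if j == l then jM (delta_mx i m, 0) else 0.
Proof. by rewrite -(alg_homM jM_hom) MatMu_unitM; case: eqP; rewrite ?(alg_hom0 jM_hom). Qed.

Ltac unit_table := rewrite ?iA_e1 ?iA_e2 jM_unitM.
Lemma E12E21 : E12 * E21 = e1. Proof. by unit_table. Qed.
Lemma E21E12 : E21 * E12 = e2. Proof. by unit_table. Qed.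
Lemma e1E12 : e1 * E12 = E12. Proof. by unit_table. Qed.
Lemma E12e2 : E12 * e2 = E12. Proof. by unit_table. Qed.
Lemma e2E21 : e2 * E21 = E21. Proof. by unit_table. Qed.
Lemma E21e1 : E21 * e1 = E21. Proof. by unit_table. Qed.
Lemma E12e1 : E12 * e1 = 0. Proof. by unit_table. Qed.
Lemma e2E12 : e2 * E12 = 0. Proof. by unit_table. Qed.
Lemma E21e2 : E21 * e2 = 0. Proof. by unit_table. Qed.
Lemma e1E21 : e1 * E21 = 0. Proof. by unit_table. Qed.
Lemma E12E12 : E12 * E12 = 0. Proof. by unit_table. Qed.
Lemma E21E21 : E21 * E21 = 0. Proof. by unit_table. Qed.
Lemma e1e1 : e1 * e1 = e1. Proof. by unit_table. Qed.
Lemma e2e2 : e2 * e2 = e2. Proof. by unit_table. Qed.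
Lemma e1e2 : e1 * e2 = 0. Proof. by unit_table. Qed.
Lemma e2e1 : e2 * e1 = 0. Proof. by unit_table. Qed.

Lemma epsE12 : eps * E12 = E12. Proof. by rewrite mulrBl mul1r e2E12 subr0. Qed.
Lemma E12eps : E12 * eps = 0. Proof. by rewrite mulrBr mulr1 E12e2 subrr. Qed.
Lemma epsE21 : eps * E21 = 0. Proof. by rewrite mulrBl mul1r e2E21 subrr. Qed.
Lemma E21eps : E21 * eps = E21. Proof. by rewrite mulrBr mulr1 E21e2 subr0. Qed.
Lemma epse1 : eps * e1 = e1. Proof. by rewrite mulrBl mul1r e2e1 subr0. Qed.
Lemma e1eps : e1 * eps = e1. Proof. by rewrite mulrBr mulr1 e1e2 subr0. Qed.
Lemma epse2 : eps * e2 = 0. Proof. by rewrite mulrBl mul1r e2e2 subrr. Qed.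
Lemma e2eps : e2 * eps = 0. Proof. by rewrite mulrBr mulr1 e2e2 subrr. Qed.
Lemma epseps : eps * eps = eps. Proof. by rewrite mulrBl mul1r e2eps subr0. Qed.

Lemma iA_eM s t : iA (e s) * iA (e t) = if s == t then iA (e s) else 0.
Proof. by rewrite -(alg_homM iA_hom) e_idem.1; case: eqP; rewrite ?(alg_hom0 iA_hom). Qed.

Section OtherVertex.
Variable s : 'I_n.+2.
Hypotheses (s0 : s != ord0) (s1 : s != 1).
Local Notation es := (iA (e s)).

Lemma eses : es * es = es. Proof. by rewrite iA_eM eqxx. Qed.
Lemma ese1 : es * e1 = 0. Proof. by rewrite iA_eM (negbTE s0). Qed.
Lemma e1es : e1 * es = 0. Proof. by rewrite iA_eM eq_sym (negbTE s0). Qed.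
Lemma ese2 : es * e2 = 0. Proof. by rewrite iA_eM (negbTE s1). Qed.
Lemma e2es : e2 * es = 0. Proof. by rewrite iA_eM eq_sym (negbTE s1). Qed.
Lemma eseps : es * eps = es. Proof. by rewrite mulrBr mulr1 ese2 subr0. Qed.
Lemma epses : eps * es = es. Proof. by rewrite mulrBl mul1r e2es subr0. Qed.
Lemma E12es : E12 * es = 0. Proof. by rewrite -E12e2 -mulrA e2es mulr0. Qed.
Lemma esE12 : es * E12 = 0. Proof. by rewrite -e1E12 mulrA ese1 mul0r. Qed.
Lemma E21es : E21 * es = 0. Proof. by rewrite -E21e1 -mulrA e1es mulr0. Qed.
Lemma esE21 : es * E21 = 0. Proof. by rewrite -e2E21 mulrA ese2 mul0r. Qed.

End OtherVertex.

End FusionRelations.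

Section FusionGeneration.
Variables (k : fieldType) (n : nat) (A : algType k) (e : 'I_n.+2 -> A).
Variables (Abar : algType k) (iA : A -> Abar) (jM : MatMu k -> Abar).
Hypotheses (e_idem : idempotent_family e) (free : is_free_product (e1A e) (e2A e) iA jM).

Local Notation e1 := (iA (e1A e)).
Local Notation eps := (eps e iA).
Local Notation E12 := (E12 jM).
Local Notation E21 := (E21 jM).
Local Notation inAf := (inAf e iA).
Local Notation eplus := (eplus e iA jM).
Local Notation eminus := (eminus e iA jM).

Let iA_hom : alg_hom iA. Proof. by case: free. Qed.

Lemma inAfE a : inAf a <-> eps * a = a /\ a * eps = a.
Proof.
split=> [Aa | [Aa1 Aa2]]; last by rewrite /Defs.inAf Aa1 Aa2.
by rewrite -Aa; split; [rewrite !mulrA (epseps free) | rewrite -!mulrA (epseps free)].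
Qed.

Lemma inAfM a b : inAf a -> inAf b -> inAf (a * b).
Proof. by move=> /inAfE[Aa1 Aa2] /inAfE[Ab1 Ab2]; apply/inAfE; rewrite mulrA Aa1 -mulrA Ab2. Qed.

Lemma inAf_corner p q z : inAf (eplus p * z * eminus q).
Proof.
have eps_eplus : eps * eplus p = eplus p by case: p; rewrite /= ?(epsE12 free) ?(epseps free).
have eminus_eps : eminus q * eps = eminus q by case: q; rewrite /= ?(E21eps free) ?(epseps free).
by apply/inAfE; rewrite !mulrA eps_eplus -!mulrA eminus_eps.
Qed.

Lemma iA_epsA : iA (epsA e) = eps.
Proof. by rewrite (alg_homB iA_hom) (alg_hom1 iA_hom). Qed.

Local Notation side b := (if b then e2A e else epsA e).

Lemma side_idem (b : bool) : side b * side b = side b.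
Proof.
have e2A_idem : e2A e * e2A e = e2A e by rewrite e_idem.1 eqxx.
by case: b; rewrite // mulrBr mulr1 !mulrBl mul1r e2A_idem subrr subr0.
Qed.

Lemma eplus_side p : eplus p * iA (side p) = eplus p.
Proof. by case: p; rewrite /= ?iA_epsA ?(E12e2 free) ?(epseps free). Qed.

Lemma side_eminus q : iA (side q) * eminus q = eminus q.
Proof. by case: q; rewrite /= ?iA_epsA ?(e2E21 free) ?(epseps free). Qed.

Variable brf : Abar -> Abar -> tensor2 Abar.
Hypothesis brf_double : double_bracket_on inAf (Bf e iA) brf.
Variables (es X : Abar).
Hypothesis X_Af : inAf X.
Hypothesis moment_gen :
  forall p q alpha, gen_ok e p q alpha -> moment_at brf es X (gen e iA jM p q alpha).

Let corner_moment z := forall p q, moment_at brf es X (eplus p * z * eminus q).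

Lemma corner_moment_lin c z w :
  corner_moment z -> corner_moment w -> corner_moment (c *: z + w).
Proof.
move=> Mz Mw p q; rewrite mulrDr mulrDl -scalerAr -scalerAl.
exact: (moment_at_lin brf_double X_Af c (inAf_corner _ _ _) (inAf_corner _ _ _) (Mz p q) (Mw p q)).
Qed.

Lemma corner_moment_mul z w : corner_moment z -> corner_moment w -> corner_moment (z * w).
Proof.
move=> Mz Mw p q.
have unit_split : eminus false * eplus false + eminus true * eplus true = 1.
  by rewrite /= (epseps free) (E21E12 free) subrK.
rewrite (mulr_split_unit _ _ _ _ unit_split).
apply: (moment_atD brf_double X_Af); try apply: inAfM; try apply: (moment_atM brf_double X_Af);
  first [exact: inAf_corner | exact: Mz | exact: Mw].
Qed.

Lemma corner_moment_iA x : corner_moment (iA x).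
Proof.
move=> p q; have gen_ok_x : gen_ok e p q (side p * x * side q).
  by rewrite /Defs.gen_ok !mulrA side_idem -!mulrA side_idem.
have := moment_gen gen_ok_x.
by rewrite /Defs.gen !(alg_homM iA_hom) !mulrA eplus_side -!mulrA side_eminus.
Qed.

Let moment_e1 : moment_at brf es X e1.
Proof. by have := corner_moment_iA (e1A e) false false; rewrite /= (epse1 free) (e1eps free). Qed.

Let moment_0 : moment_at brf es X 0 := moment_at0 brf_double es X_Af.

Lemma corner_moment_E12 : corner_moment E12.
Proof.
case=> [] [] /=; rewrite ?(E12E12 free, epsE12 free, E12E21 free, E12eps free, mul0r);
  first [exact: moment_0 | exact: moment_e1].
Qed.

Lemma corner_moment_E21 : corner_moment E21.
Proof.
case=> [] [] /=; rewrite ?(E12E21 free, epsE21 free, e1E21 free, e1eps free, mul0r);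
  first [exact: moment_0 | exact: moment_e1].
Qed.

Lemma moment_at_Af a : inAf a -> moment_at brf es X a.
Proof.
move=> /inAfE[Aa1 Aa2].
have := free_product_ind free corner_moment_iA corner_moment_E12 corner_moment_E21
  corner_moment_lin corner_moment_mul a false false.
by rewrite /= Aa1 Aa2.
Qed.

End FusionGeneration.

Section Generators.
Variables (k : fieldType) (n : nat) (A : algType k) (e : 'I_n.+2 -> A).
Variables (brA : A -> A -> tensor2 A) (Phi : 'I_n.+2 -> A).
Variables (Abar : algType k) (iA : A -> Abar) (jM : MatMu k -> Abar).
Variable brf : Abar -> Abar -> tensor2 Abar.
Hypotheses (e_idem : idempotent_family e) (qHam : quasi_Hamiltonian e brA Phi).
Hypotheses (free : is_free_product (e1A e) (e2A e) iA jM).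
Hypothesis fusion : is_fusion_bracket e iA jM brA brf.

Local Notation e1 := (iA (e1A e)).
Local Notation e2 := (iA (e2A e)).
Local Notation eps := (eps e iA).
Local Notation gen := (gen e iA jM).
Local Notation eplus := (eplus e iA jM).
Local Notation eminus := (eminus e iA jM).

Let iA_hom : alg_hom iA. Proof. by case: free. Qed.

Lemma Phi_corner s : iA (e s) * iA (Phi s) * iA (e s) = iA (Phi s).
Proof. by case: qHam => _ [Phi_s _]; rewrite -!(alg_homM iA_hom) Phi_s. Qed.

Lemma gen_ok_corner p q b : gen_ok e p q b ->
  (if p then e2 else eps) * iA b * (if q then e2 else eps) = iA b.
Proof.
rewrite /Defs.gen_ok => b_ok; rewrite -[in RHS]b_ok !(alg_homM iA_hom).
by case: p {b_ok}; case: q; rewrite /= ?(iA_epsA free).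
Qed.

Lemma gen_ok_Phi s : s != 1 -> gen_ok e false false (Phi s).
Proof.
move=> s1; case: qHam => _ [Phi_s _]; rewrite /Defs.gen_ok /= -Phi_s.
have epsA_es : epsA e * e s = e s by rewrite mulrBl mul1r e_idem.1 eq_sym (negbTE s1) subr0.
have es_epsA : e s * epsA e = e s by rewrite mulrBr mulr1 e_idem.1 (negbTE s1) subr0.
by rewrite !mulrA epsA_es -!mulrA es_epsA.
Qed.

Lemma gen_ok_Phi2 : gen_ok e true true (Phi 1).
Proof. by case: qHam => _ [Phi_s _]; apply: Phi_s. Qed.

Lemma br_ind_moment pX qX t p q b phi : bilin phi ->
  br_ind e iA jM brA pX qX (Phi t) p q b phi =
  moment_rhs (e t) (Phi t) b
    (fun y1 y2 => phi (eplus p * iA y1 * eminus qX) (eplus pX * iA y2 * eminus q)).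
Proof.
case: qHam => _ [_ [_ moment]] phi_bilin; rewrite /br_ind moment //.
exact (bilin_comp phi_bilin (linear_sandwich iA_hom _ _) (linear_sandwich iA_hom _ _)).
Qed.

Lemma fusion_bracket_gen p q alpha p' q' beta phi :
  gen_ok e p q alpha -> gen_ok e p' q' beta -> bilin phi ->
  brf (gen p q alpha) (gen p' q' beta) phi =
  br_ind e iA jM brA p q alpha p' q' beta phi + br_fus e iA jM p q alpha p' q' beta phi.
Proof. by case: fusion => _ gen_br *; rewrite gen_br. Qed.

(* The identities on generators are checked on words in the letters E12, E21,
   eps, e1, e2 (and e_s): products are left-associated and rewritten with the
   multiplication table below (each entry also under a left factor).  Beforehand
   [iA b] and [iA (Phi s)] are replaced by their idempotent sandwiches, so that
   the table alone decides which words vanish. *)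
Local Notation ctx H := (H, mulrA_eq H).

Let base_rules := (ctx (E12E21 free), ctx (E12e2 free), ctx (E12e1 free), ctx (E12E12 free),
  ctx (E12eps free), ctx (E21E12 free), ctx (E21e1 free), ctx (E21e2 free),
  ctx (E21E21 free), ctx (E21eps free), ctx (epsE12 free), ctx (epsE21 free),
  ctx (epse1 free), ctx (epse2 free), ctx (epseps free), ctx (e1E12 free), ctx (e1E21 free),
  ctx (e1e1 free), ctx (e1e2 free), ctx (e1eps free), ctx (e2E21 free), ctx (e2E12 free),
  ctx (e2e1 free), ctx (e2e2 free), ctx (e2eps free)).

Section OtherVertex.
Variable s : 'I_n.+2.
Hypotheses (s0 : s != ord0) (s1 : s != 1).
Local Notation es := (iA (e s)).

Let vertex_rules := (ctx (E12es e_idem free s1), ctx (E21es e_idem free s0),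
  ctx (epses e_idem free s1), ctx (e1es e_idem free s0), ctx (e2es e_idem free s1),
  ctx (esE12 e_idem free s0), ctx (esE21 e_idem free s1), ctx (ese1 e_idem free s0),
  ctx (ese2 e_idem free s1), ctx (eseps e_idem free s1), ctx (eses e_idem free s)).

Lemma moment_at_TrPhi_gen p q b :
  gen_ok e p q b -> moment_at brf es (gen false false (Phi s)) (gen p q b).
Proof.
move=> b_ok phi phi_bilin.
rewrite (fusion_bracket_gen (gen_ok_Phi s1) b_ok phi_bilin) br_ind_moment //.
move: (gen_ok_corner b_ok) => {b_ok}.
case: p; case: q => /= b_corner;
rewrite /br_fus /TrE1 /TrE2 /tprod /moment_rhs /tadd /tscale /ev2 /tzero /e1b /Defs.gen /=;
rewrite !(alg_homM iA_hom) -b_corner -(Phi_corner s);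
rewrite ?(@mulrA Abar) ?(base_rules, vertex_rules, @mulr0 Abar, @mul0r Abar);
rewrite ?(bilin0l phi_bilin, bilin0r phi_bilin); ring.
Qed.

End OtherVertex.

Lemma moment_at_Phif1_gen p q b : gen_ok e p q b ->
  moment_at brf e1 (gen false false (Phi ord0) * gen true true (Phi 1)) (gen p q b).
Proof.
move=> b_ok phi phi_bilin; have [br_double _] := fusion.
have Af_corner := inAf_corner free.
rewrite (bracket_mull br_double (Af_corner _ _ _) (Af_corner _ _ _)
          (inAfM free (Af_corner _ _ _) (Af_corner _ _ _)) (Af_corner _ _ _) phi_bilin).
rewrite (fusion_bracket_gen (gen_ok_Phi (isT : ord0 != 1)) b_ok (bilin_mulr_fst phi_bilin _)).
rewrite (fusion_bracket_gen gen_ok_Phi2 b_ok (bilin_mull_snd phi_bilin _)).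
rewrite !br_ind_moment; try exact: bilin_mulr_fst; try exact: bilin_mull_snd.
move: (gen_ok_corner b_ok) => {b_ok}.
case: p; case: q => /= b_corner;
rewrite /br_fus /TrE1 /TrE2 /tprod /moment_rhs /tadd /tscale /ev2 /tzero /e1b /Defs.gen /=;
rewrite !(alg_homM iA_hom) -b_corner -(Phi_corner ord0 : e1 * _ * e1 = _)
  -(Phi_corner 1 : e2 * _ * e2 = _);
rewrite ?(@mulrA Abar) ?(base_rules, @mulr0 Abar, @mul0r Abar);
rewrite ?(bilin0l phi_bilin, bilin0r phi_bilin); ring.
Qed.

End Generators.

Unset Implicit Arguments.

Theorem lemma2p21 (k : fieldType) (char0 : [pchar k] =i pred0)
  (n : nat) (A : algType k) (e : 'I_n.+2 -> A)
  (brA : A -> A -> tensor2 A) (Phi : 'I_n.+2 -> A)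
  (Abar : algType k) (iA : A -> Abar) (jM : MatMu k -> Abar)
  (brf : Abar -> Abar -> tensor2 Abar) :
  idempotent_family e ->
  quasi_Hamiltonian e brA Phi ->
  is_free_product (e1A e) (e2A e) iA jM ->
  is_fusion_bracket e iA jM brA brf ->
  (forall (s : 'I_n.+2), s != ord0 -> s != 1 -> forall a : Abar, inAf e iA a ->
     teq (brf (TrPhi e iA jM Phi s) a)
         (moment_rhs (iA (e s)) (TrPhi e iA jM Phi s) a)) /\
  (let Phif1 := TrPhi e iA jM Phi ord0 * TrPhi e iA jM Phi 1 in
   forall a : Abar, inAf e iA a ->
     teq (brf Phif1 a) (moment_rhs (e1b e iA) Phif1 a)).
Proof.
move=> e_idem qHam free fusion; have [br_double _] := fusion.
have Af_corner := inAf_corner free.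
split=> [s s0 s1 | ].
- have -> : TrPhi e iA jM Phi s = gen e iA jM false false (Phi s) by rewrite /TrPhi (negbTE s1).
  apply: (moment_at_Af e_idem free br_double (Af_corner _ _ _)) => p q b.
  exact: (moment_at_TrPhi_gen e_idem qHam free fusion s0 s1).
- have -> : TrPhi e iA jM Phi ord0 = gen e iA jM false false (Phi ord0) by [].
  have -> : TrPhi e iA jM Phi 1 = gen e iA jM true true (Phi 1) by rewrite /TrPhi eqxx.
  apply: (moment_at_Af e_idem free br_double (inAfM free (Af_corner _ _ _) (Af_corner _ _ _)))
    => p q b.
  exact: (moment_at_Phif1_gen e_idem qHam free fusion).
Qed.
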